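(* Let $\mathcal A$ be a Banach algebra such that the ultrapower $(\mathcal A)_{\mathcal U}$ is simple for some non-principal ultrafilter $\mathcal U$ on $\mathbb N$. Then for every Banach algebra $\mathcal B$, every non-zero continuous algebra homomorphism $\psi:\mathcal A\to\mathcal B$ is bounded below, i.e. there is $c>0$ with $\|\psi(a)\|\geqslant c\|a\|$ for all $a\in\mathcal A$.
   Context: For an ultrafilter $\mathcal U$ on $\mathbb N$, the ultrapower is $(\mathcal A)_{\mathcal U}=\ell^\infty(\mathcal A)/c_{\mathcal U}(\mathcal A)$, where $\ell^\infty(\mathcal A)$ is the Banach algebra of bounded sequences in $\mathcal A$ with pointwise operations and sup norm, and $c_{\mathcal U}(\mathcal A)$ is the closed ideal of sequences $(a_n)$ with $\lim_{n\to\mathcal U}\|a_n\|=0$. An algebra is simple if its only two-sided ideals are $\{0\}$ and itself. *)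

From mathcomp Require Import all_boot all_order all_algebra.
From mathcomp Require Import complex.
From mathcomp Require Import all_classical all_reals all_analysis.
Import numFieldNormedType.Exports.
Import Order.TTheory GRing.Theory Num.Theory.

Set Implicit Arguments.
Unset Strict Implicit.
Unset Printing Implicit Defensive.

Local Open Scope ring_scope.
Local Open Scope classical_set_scope.

Definition banach_algebra_mul (R : realType) (A : completeNormedModType R[i])
    (mul : A -> A -> A) : Prop :=
  [/\ (forall a b c : A, mul a (mul b c) = mul (mul a b) c),
      (forall a b c : A, mul (a + b) c = mul a c + mul b c) /\
      (forall a b c : A, mul a (b + c) = mul a b + mul a c),
      (forall (k : R[i]) (a b : A), mul (k *: a) b = k *: mul a b),
      (forall (k : R[i]) (a b : A), mul a (k *: b) = k *: mul a b)
    & (forall a b : A, `|mul a b| <= `|a| * `|b|)].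

Definition nonprincipal_ultrafilter (U : set_system nat) : Prop :=
  UltraFilter U /\ ~ (exists n : nat, U = principal_filter n).

Definition bounded_seq (R : realType) (A : completeNormedModType R[i])
    (u : nat -> A) : Prop :=
  exists M : R[i], forall n, `|u n| <= M.

Definition null_along (R : realType) (A : completeNormedModType R[i])
    (U : set_system nat) (u : nat -> A) : Prop :=
  forall e : R[i], 0 < e -> U [set n | `|u n| < e].

(* A two-sided ideal of the ultrapower (A)_U = l^oo(A)/c_U(A), represented
   by its preimage J in l^oo(A) under the quotient map: J is a set of bounded
   sequences which is a union of cosets of c_U(A), is a linear subspace, and
   is stable under left and right multiplication by elements of l^oo(A)
   (pointwise product). *)
Definition ultrapower_ideal (R : realType) (A : completeNormedModType R[i])
    (mul : A -> A -> A) (U : set_system nat) (J : set (nat -> A)) : Prop :=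
  [/\ J `<=` bounded_seq (A:=A),
      (forall u v, J u -> bounded_seq v -> null_along U (u - v) -> J v) /\
      J (fun _ => 0),
      (forall u v, J u -> J v -> J (u + v)),
      (forall (k : R[i]) u, J u -> J (fun n => k *: u n))
    & (forall u v, J u -> bounded_seq v ->
         J (fun n => mul (v n) (u n)) /\ J (fun n => mul (u n) (v n)))].

(* (A)_U is simple: its only two-sided ideals are {0} (preimage c_U(A) inside
   l^oo(A)) and the whole ultrapower (preimage l^oo(A)). *)
Definition ultrapower_simple (R : realType) (A : completeNormedModType R[i])
    (mul : A -> A -> A) (U : set_system nat) : Prop :=
  forall J : set (nat -> A), ultrapower_ideal mul U J ->
    J = [set u | bounded_seq u /\ null_along U u] \/ J = bounded_seq (A:=A).

Definition algebra_hom (R : realType) (A B : completeNormedModType R[i])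
    (mulA : A -> A -> A) (mulB : B -> B -> B) (psi : A -> B) : Prop :=
  [/\ (forall a b, psi (a + b) = psi a + psi b),
      (forall (k : R[i]) a, psi (k *: a) = k *: psi a)
    & (forall a b, psi (mulA a b) = mulB (psi a) (psi b))].

From mathcomp Require Import all_boot all_order all_algebra.
From mathcomp Require Import complex.
From mathcomp Require Import all_classical all_reals all_analysis.
From mathcomp Require Import ring.
Import numFieldNormedType.Exports.
Import Order.TTheory GRing.Theory Num.Theory.
Set Implicit Arguments.
Unset Strict Implicit.
Unset Printing Implicit Defensive.

Local Open Scope ring_scope.
Local Open Scope classical_set_scope.
Local Open Scope complex_scope.

(* Continuity
   gives a bound ||psi a|| <= M ||a||, so psi induces a homomorphism
   psi_U : (A)_U -> (B)_U whose kernel is a two-sided ideal of (A)_U; its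
   preimage in l^oo(A) is the set J of bounded sequences u with
   lim_U ||psi (u n)|| = 0.  By simplicity J is c_U(A) or all of l^oo(A).
   The second case is impossible: the constant sequence at some a0 with
   psi a0 <> 0 is bounded but not in J.  In the first case, if psi were not
   bounded below we could pick unit vectors b n with ||psi (b n)|| < 1/(n+1);
   as U contains all cofinite sets, b lies in J = c_U(A), contradicting
   ||b n|| = 1.
   The file first proves the needed facts on non-principal ultrafilters,
   null sequences along a filter and bounded sequences, then the bound for
   continuous linear maps, then that J is an ultrapower ideal, and finally
   the unit sequence witnessing failure of boundedness below. *)

Lemma nonprincipal_final_segment (U : set_system nat) :
  nonprincipal_ultrafilter U -> forall N, U [set m | (N <= m)%N].
Proof.
move=> [UU nonprinc]; have PF : ProperFilter U := @ultra_proper _ _ UU.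
elim=> [|N IH]; first by apply: filterS filterT => m.
have [UN|UnotN] := in_ultra_setVsetC [set N] UU.
  exfalso; apply: nonprinc; exists N; rewrite eqEsubset; split=> S.
  - move=> US; apply/principal_filterP.
    by have [m [Sm /= <-]] := filter_ex (filterI US UN).
  - by move/principal_filterP=> SN; apply: filterS UN => m ->.
apply: filterS (filterI IH UnotN) => m [Nm /= mN].
by rewrite ltn_neqAle Nm andbT; apply/eqP => E; apply: mN; rewrite E.
Qed.

(* Scalar sequences tending to 0 along a filter F: the notion [null_along] is exactly [null_seq F (fun n => `|u n|)]. *)
Section NullSequences.
Variables (K : numFieldType) (F : set_system nat).
Hypothesis FF : Filter F.

Definition null_seq (p : nat -> K) : Prop :=
  forall e : K, 0 < e -> F [set n | p n < e].

Lemma null_seq_dom (p q : nat -> K) (C : K) : 0 < C ->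
  (forall n, q n <= C * p n) -> null_seq p -> null_seq q.
Proof.
move=> C0 hq hp e e0; apply: filterS (hp (e / C) (divr_gt0 e0 C0)) => n /= h.
by apply: le_lt_trans (hq n) _; rewrite -ltr_pdivlMl // mulrC.
Qed.

Lemma null_seq_add (p1 p2 q : nat -> K) :
  (forall n, q n <= p1 n + p2 n) -> null_seq p1 -> null_seq p2 -> null_seq q.
Proof.
move=> hq h1 h2 e e0; have e2 : 0 < e / 2 by rewrite divr_gt0.
apply: filterS (filterI (h1 _ e2) (h2 _ e2)) => n [/= a b].
by apply: le_lt_trans (hq n) _; rewrite (splitr e) ltrD.
Qed.

Lemma null_seq0 : null_seq (fun _ => 0).
Proof. by move=> e e0; apply: filterS filterT. Qed.

Lemma not_null_seq_ge (p : nat -> K) (c : K) : ProperFilter F ->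
  0 < c -> (forall n, c <= p n) -> ~ null_seq p.
Proof.
move=> PF c0 hp /(_ c c0) Fc; have [n /= pn_lt_c] := filter_ex Fc.
by have := lt_le_trans pn_lt_c (hp n); rewrite ltxx.
Qed.
End NullSequences.
Arguments null_seq {K} F p.
Arguments null_seq_dom {K F FF} [p q C].
Arguments null_seq_add {K F FF} [p1 p2 q].
Arguments null_seq0 {K F FF}.
Arguments not_null_seq_ge {K F} [p c].

Lemma null_seq_inv_succ (R : realType) (U : set_system nat) :
  nonprincipal_ultrafilter U ->
  null_seq U (fun n : nat => ((n.+1%:R)^-1 : R)%:C).
Proof.
move=> nU e; have PF : ProperFilter U := @ultra_proper _ _ nU.1.
rewrite ltcE => /andP[/eqP Ime Ree].
have [N ltNe] : exists N : nat, ((N.+1%:R)^-1 : R)%:C < e.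
  exists (Num.Def.archi_bound (complex.Re e)^-1).
  rewrite ltcE /= Ime /= eqxx /=.
  rewrite -[complex.Re e]invrK ltf_pV2 ?posrE ?invr_gt0 ?ltr0Sn //.
  apply: lt_le_trans (archi_boundP _) _; first by rewrite invr_ge0 ltW.
  by rewrite invrK ler_nat.
apply: filterS (nonprincipal_final_segment nU N) => n /= Nn.
apply: le_lt_trans ltNe.
by rewrite lecR lef_pV2 ?posrE ?ltr0Sn // ler_nat.
Qed.

Section BoundedSequences.
Variables (R : realType) (A : completeNormedModType R[i]).

Lemma bounded_seq_pos (u : nat -> A) : bounded_seq u ->
  exists2 K : R[i], 0 < K & forall n, `|u n| <= K.
Proof.
move=> [K hK]; exists (K + 1) => [|n].
  by rewrite ltr_wpDl // (le_trans (normr_ge0 _) (hK 0%N)).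
by apply: le_trans (hK n) _; rewrite lerDl.
Qed.

Lemma bounded_seqD (u v : nat -> A) :
  bounded_seq u -> bounded_seq v -> bounded_seq (u + v).
Proof.
move=> /bounded_seq_pos[Ku _ hu] /bounded_seq_pos[Kv _ hv].
by exists (Ku + Kv) => n; apply: le_trans (ler_normD _ _) (lerD (hu n) (hv n)).
Qed.

Lemma bounded_seqZ (k : R[i]) (u : nat -> A) :
  bounded_seq u -> bounded_seq (fun n => k *: u n).
Proof.
by move=> /bounded_seq_pos[Ku _ hu]; exists (`|k| * Ku) => n; rewrite normrZ ler_wpM2l.
Qed.

Lemma bounded_seq_mul (mul : A -> A -> A) (u v : nat -> A) :
  (forall a b, `|mul a b| <= `|a| * `|b|) ->
  bounded_seq u -> bounded_seq v -> bounded_seq (fun n => mul (u n) (v n)).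
Proof.
move=> hmul /bounded_seq_pos[Ku _ hu] /bounded_seq_pos[Kv _ hv].
exists (Ku * Kv) => n; apply: le_trans (hmul _ _) _.
by apply: ler_pM; rewrite ?normr_ge0.
Qed.
End BoundedSequences.

Lemma continuous_linear_bounded (R : realType) (A B : normedModType R[i])
    (psi : A -> B) :
  (forall a b, psi (a + b) = psi a + psi b) ->
  (forall (k : R[i]) a, psi (k *: a) = k *: psi a) ->
  continuous psi ->
  exists2 M : R[i], 0 < M & forall x, `|psi x| <= M * `|x|.
Proof.
move=> hD hZ hc.
have psi0 : psi 0 = 0 by rewrite -(scale0r (0 : A)) hZ scale0r.
have /cvgrPdist_lt/(_ 1 ltr01) := hc 0; rewrite psi0.
move=> /nbhs_ballP[d /= d0 ball_d].
exists (2 / d); first by rewrite divr_gt0.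
move=> x; have [->|xn0] := eqVneq x 0; first by rewrite psi0 !normr0 mulr0.
have nx : 0 < `|x| by rewrite normr_gt0.
(* the rescaled vector k x has norm d/2, hence ||psi (k x)|| < 1 *)
pose k : R[i] := d / (2 * `|x|).
have k0 : 0 < k by rewrite divr_gt0 // mulr_gt0.
have : ball 0 d (k *: x).
  rewrite -ball_normE /= sub0r normrN normrZ gtr0_norm //.
  rewrite (_ : k * `|x| = d / 2); last by rewrite /k; field; rewrite lt0r_neq0.
  by rewrite ltr_pdivrMr // ltr_pMr // ltr1n.
move=> /ball_d; rewrite sub0r normrN hZ normrZ gtr0_norm // => small.
apply: ltW; rewrite -(ltr_pM2l k0).
by rewrite (_ : k * (2 / d * `|x|) = 1) //; rewrite /k; field; rewrite !lt0r_neq0.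
Qed.

(* The kernel of the induced map psi_U : (A)_U -> (B)_U, pulled back to
   l^oo(A), is an ideal of the ultrapower. *)
Section KernelIdeal.
Variables (R : realType) (A B : completeNormedModType R[i]).
Variables (mulA : A -> A -> A) (mulB : B -> B -> B) (psi : A -> B).
Variables (U : set_system nat) (M : R[i]).
Hypothesis FU : Filter U.
Hypothesis mulB_norm : forall a b, `|mulB a b| <= `|a| * `|b|.
Hypothesis mulA_norm : forall a b, `|mulA a b| <= `|a| * `|b|.
Hypothesis hpsi : algebra_hom mulA mulB psi.
Hypotheses (M0 : 0 < M) (psi_bound : forall x, `|psi x| <= M * `|x|).

Definition kernel_ideal : set (nat -> A) :=
  [set u | bounded_seq u /\ null_seq U (fun n => `|psi (u n)|)].

Let psiD : forall a b, psi (a + b) = psi a + psi b.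
Proof. by case: hpsi. Qed.

Let psiZ : forall (k : R[i]) a, psi (k *: a) = k *: psi a.
Proof. by case: hpsi. Qed.

Let psi0 : psi 0 = 0.
Proof. by rewrite -(scale0r (0 : A)) psiZ scale0r. Qed.

Let psiB : forall a b, psi (a - b) = psi a - psi b.
Proof. by move=> a b; rewrite psiD -scaleN1r psiZ scaleN1r. Qed.

Let psiM : forall a b, psi (mulA a b) = mulB (psi a) (psi b).
Proof. by case: hpsi. Qed.

(* J is a union of cosets of c_U(A): psi maps c_U(A) into c_U(B). *)
Let kernel_ideal_coset (u v : nat -> A) : kernel_ideal u ->
  bounded_seq v -> null_along U (u - v) -> kernel_ideal v.
Proof.
move=> [_ nu] bv nuv; split=> //.
apply: (null_seq_add (p1 := fun n => `|psi (u n)|)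
                     (p2 := fun n => M * `|u n - v n|)) => [n| |] //.
- have -> : psi (v n) = psi (u n) - psi (u n - v n).
    by rewrite -psiB subKr.
  by apply: le_trans (ler_normB _ _) _; rewrite lerD2l.
- exact: (null_seq_dom (p := fun n => `|u n - v n|) M0).
Qed.

Let kernel_ideal_mul (u v : nat -> A) : kernel_ideal u -> bounded_seq v ->
  kernel_ideal (fun n => mulA (v n) (u n)) /\
  kernel_ideal (fun n => mulA (u n) (v n)).
Proof.
move=> [bu nu] bv; have [Kv Kv0 hv] := bounded_seq_pos bv.
have psi_v n : `|psi (v n)| <= M * Kv.
  exact: le_trans (psi_bound _) (ler_wpM2l (ltW M0) (hv n)).
split; split.
- exact: bounded_seq_mul.
- apply: (null_seq_dom (mulr_gt0 M0 Kv0) _ nu) => n /=.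
  by rewrite psiM; apply: le_trans (mulB_norm _ _) _; rewrite ler_wpM2r.
- exact: bounded_seq_mul.
- apply: (null_seq_dom (mulr_gt0 M0 Kv0) _ nu) => n /=.
  by rewrite psiM; apply: le_trans (mulB_norm _ _) _; rewrite [leRHS]mulrC ler_wpM2l.
Qed.

Lemma kernel_ideal_ultrapower_ideal : ultrapower_ideal mulA U kernel_ideal.
Proof.
split.
- by move=> u [].
- split; first exact: kernel_ideal_coset.
  split; first by exists 0 => n; rewrite normr0.
  by rewrite /= psi0 normr0; exact: null_seq0.
- move=> u v [bu nu] [bv nv]; split; first exact: bounded_seqD.
  by apply: (null_seq_add _ nu nv) => n /=; rewrite psiD ler_normD.
- move=> k u [bu nu]; split; first exact: bounded_seqZ.
  apply: (null_seq_dom (C := `|k| + 1) _ _ nu) => [|n /=]; first by rewrite ltr_wpDl.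
  by rewrite psiZ normrZ ler_wpM2r // lerDl.
- exact: kernel_ideal_mul.
Qed.
End KernelIdeal.

Lemma not_bounded_below_unit_seq (R : realType) (A B : normedModType R[i])
    (psi : A -> B) :
  (forall (k : R[i]) a, psi (k *: a) = k *: psi a) ->
  ~ (exists c : R[i], 0 < c /\ forall a : A, c * `|a| <= `|psi a|) ->
  exists b : nat -> A, (forall n, `|b n| = 1) /\
    forall n, `|psi (b n)| < ((n.+1%:R)^-1 : R)%:C.
Proof.
move=> psiZ not_below.
pose c (n : nat) : R[i] := ((n.+1%:R)^-1 : R)%:C.
have c0 n : 0 < c n by rewrite ltcR invr_gt0 ltr0Sn.
have witness n : exists a, `|psi a| < c n * `|a|.
  apply: contrapT => no_a; apply: not_below; exists (c n); split=> // a.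
  rewrite real_leNgt ?realM ?normr_real ?gtr0_real //; apply/negP => lt.
  by apply: no_a; exists a.
have [f hf] := choice witness.
have nf n : 0 < `|f n|.
  rewrite lt0r normr_ge0 andbT; apply/eqP => nf0.
  by have := le_lt_trans (normr_ge0 _) (hf n); rewrite nf0 mulr0 ltxx.
exists (fun n => `|f n|^-1 *: f n); split=> n.
  by rewrite normrZ ger0_norm ?invr_ge0 ?normr_ge0 // mulVf ?lt0r_neq0.
rewrite psiZ normrZ ger0_norm ?invr_ge0 ?normr_ge0 //.
by rewrite ltr_pdivrMl // mulrC; exact: hf.
Qed.

Theorem proposition2p9 (R : realType) (A : completeNormedModType R[i])
    (mulA : A -> A -> A) :
  banach_algebra_mul mulA ->
  (exists U : set_system nat,
      nonprincipal_ultrafilter U /\ ultrapower_simple mulA U) ->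
  forall (B : completeNormedModType R[i]) (mulB : B -> B -> B),
    banach_algebra_mul mulB ->
    forall psi : A -> B,
      algebra_hom mulA mulB psi -> continuous psi ->
      (exists a : A, psi a <> 0) ->
      exists c : R[i], 0 < c /\ forall a : A, c * `|a| <= `|psi a|.
Proof.
move=> [_ _ _ _ mulA_norm] [U [nU simple]] B mulB [_ _ _ _ mulB_norm] psi
  hpsi psi_cont [a0 psi_a0].
have PF : ProperFilter U := @ultra_proper _ _ nU.1.
have [psiD psiZ _] := hpsi.
have [M M0 psi_bound] := continuous_linear_bounded psiD psiZ psi_cont.
have J_ideal := kernel_ideal_ultrapower_ideal PF mulB_norm mulA_norm hpsi M0 psi_bound.
case: (simple _ J_ideal) => J_eq; last first.
  (* J is not everything: the constant sequence a0 is not in J *)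
  exfalso; have psi_a0_pos : 0 < `|psi a0| by rewrite normr_gt0; apply/eqP.
  have : bounded_seq (fun _ : nat => a0) by exists `|a0|.
  by rewrite -J_eq => -[_]; exact: (not_null_seq_ge PF psi_a0_pos (fun n => lexx _)).
(* J = c_U(A): a unit sequence almost killed by psi would lie in c_U(A) *)
apply: contrapT => not_below.
have [b [b_unit psi_b]] := not_bounded_below_unit_seq psiZ not_below.
have Jb : kernel_ideal psi U b.
  split; first by exists 1 => n; rewrite b_unit.
  apply: (null_seq_dom ltr01 _ (null_seq_inv_succ nU)) => n.
  by rewrite mul1r; exact: ltW.
have b_ge1 n : 1 <= `|b n| by rewrite b_unit.
by move: Jb; rewrite J_eq => -[_]; exact: (not_null_seq_ge PF ltr01 b_ge1).
Qed.
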